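(* Let $(s_1,s_2)$ and $(s'_1,s'_2)$ be two ordered pairs of involutive elements of $S_n$ and $\beta,\beta'$ their dihedral decompositions. Then $(s_1,s_2)$ is conjugate to $(s'_1,s'_2)$ (i.e. $s'_i=gs_ig^{-1}$, $i=1,2$, for some $g\in S_n$) if and only if $\beta=\beta'$.
   Context: An involutive element is $s\in S_n$ with $s^2=1$ (the identity included). Given an ordered pair $(s_1,s_2)$ of involutions, the infinite dihedral group $D_\infty=\langle\sigma_1,\sigma_2\mid\sigma_1^2=\sigma_2^2=1\rangle$ acts on $\{1,\dots,n\}$ via $\sigma_i\mapsto s_i$. Each orbit is of one of four types: type 1: neither $\sigma_1$ nor $\sigma_2$ has a fixed point in it (even size); type 2: each of $\sigma_1,\sigma_2$ has exactly one fixed point (odd size); type 3: $\sigma_1$ has two fixed points and $\sigma_2$ none (even size); type 4: $\sigma_1$ has none and $\sigma_2$ has two fixed points (even size). The dihedral decomposition of $(s_1,s_2)$ is the collection, for each type $t=1,2,3,4$, of the unordered multiset of sizes of the orbits of type $t$. *)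

From mathcomp Require Import all_boot all_order all_fingroup.
Set Implicit Arguments. Unset Strict Implicit. Unset Printing Implicit Defensive.


(* Elements of S_n are permutations of 'I_n = {0,..,n-1}. *)
Definition involutive_perm (n : nat) (s : {perm 'I_n}) : Prop := (s * s = 1)%g.

Section Dihedral.
Variables (n : nat) (s1 s2 : {perm 'I_n}).

(* the image of D_infinity = <sigma1, sigma2> acting via sigma_i |-> s_i *)
Definition dih_group : {group {perm 'I_n}} := <<[set s1; s2]>>%G.

Definition dih_orbits : {set {set 'I_n}} :=
  [set orbit 'P dih_group x | x : 'I_n].

Definition nfix (s : {perm 'I_n}) (O : {set 'I_n}) : nat :=
  #|[set x in O | s x == x]|.

Definition orbit_type (O : {set 'I_n}) : nat :=
  match (nfix s1 O, nfix s2 O) with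
  | (0, 0) => 1%N
  | (1, 1) => 2%N
  | (2, 0) => 3%N
  | (0, 2) => 4%N
  | _ => 0%N
  end.

(* unordered multiset of sizes of orbits of type t, as a sorted list *)
Definition sizes_of_type (t : nat) : seq nat :=
  sort leq (map (fun O : {set 'I_n} => #|O|) (enum [set O in dih_orbits | orbit_type O == t :> nat])).

Definition dihedral_decomposition : seq (seq nat) :=
  [seq sizes_of_type t | t <- [:: 1; 2; 3; 4]].
End Dihedral.

(* Let r be s1 followed by s2. Since s1 r s1 = r^-1, the orbit of x under <s1, s2> is
   the union of the r-cycles of x and of s1 x, on which s1 acts as a reflection. Either
   these two cycles coincide, and then s1 or s2 has a fixed point in the orbit and the
   parity of its length decides how many fixed points s1 and s2 have (types 2, 3, 4);
   or they are disjoint cycles of the same length exchanged by s1, and there are no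
   fixed points (type 1). Choosing the base point x as a fixed point of s1 (or of s2)
   in the first case, two orbits of the same type and size become isomorphic by sending
   r^j x to r'^j x' (and s1 r^j x to s1' r'^j x'). Gluing such isomorphisms along a
   bijection of the orbits that preserves type and size yields the conjugating
   permutation; conversely conjugation by g maps orbits to orbits, preserving types and
   sizes. *)

From mathcomp Require Import all_boot all_order all_fingroup zify.

Set Implicit Arguments. Unset Strict Implicit. Unset Printing Implicit Defensive.

Lemma double_eq0_mod c j : j < c -> (j.*2 == 0 %[mod c]) = (j == 0) || (j.*2 == c).
Proof.
move=> jc; rewrite mod0n; case: (ltnP j.*2 c) => [lt2 | ge2].
  by rewrite modn_small //; lia.
by rewrite -(subnK ge2) modnDr modn_small; lia.
Qed.

Lemma card_double_eq0_mod c :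
  0 < c -> #|[set j : 'I_c | j.*2 == 0 %[mod c]]| = (~~ odd c).+1.
Proof.
move=> c_gt0; have [c_odd | c_even] := boolP (odd c).
  rewrite -(cards1 (Ordinal c_gt0)); apply: eq_card => j.
  by rewrite !inE double_eq0_mod // -val_eqE /=; lia.
have half_lt : c./2 < c by lia.
transitivity #|[set Ordinal c_gt0; Ordinal half_lt]|.
  by apply: eq_card => j; rewrite !inE double_eq0_mod // -!val_eqE /=; lia.
by rewrite cards2 -val_eqE /=; lia.
Qed.

Lemma perm_fibersP (A B : eqType) (s1 s2 : seq (A * B)) :
  reflect (forall a, perm_eq [seq p.2 | p <- s1 & p.1 == a] [seq p.2 | p <- s2 & p.1 == a])
          (perm_eq s1 s2).
Proof.
apply: (iffP idP) => [eq12 a | eq_fibers]; first by rewrite perm_map ?perm_filter.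
apply/allP => -[a b] _ /=; move/seq.permP/(_ (pred1 b)): (eq_fibers a).
have same : predI (preim snd (pred1 b)) (fun p => p.1 == a) =1 pred1 (a, b).
  by move=> [x y]; rewrite /= xpair_eqE andbC.
by rewrite !count_map !count_filter !(eq_count same) => ->.
Qed.

Section IterOrder.
Variables (T : finType) (f : T -> T).
Hypothesis f_inj : injective f.

Lemma iter_mul_order x q : iter (q * fingraph.order f x)%N f x = x.
Proof. by elim: q => // q IHq; rewrite mulSn iterD IHq iter_order. Qed.

Lemma iter_mod_order x i : iter (i %% fingraph.order f x) f x = iter i f x.
Proof. by rewrite {2}(divn_eq i (fingraph.order f x)) addnC iterD iter_mul_order. Qed.

Lemma eq_iter_order x i j : (iter i f x == iter j f x) = (i == j %[mod fingraph.order f x]).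
Proof.
rewrite -iter_mod_order -(iter_mod_order x j); apply/eqP/eqP => [eq_ij | -> //].
by rewrite -(findex_iter (ltn_pmod i (fingraph.order_gt0 f x))) eq_ij findex_iter ?ltn_pmod.
Qed.

Lemma iter_inj j : injective (iter j f).
Proof. by elim: j => // j IHj y z /f_inj /IHj. Qed.

End IterOrder.

Arguments iter_inj [T f] f_inj j [x1 x2].

Section CycleTransfer.
Variables (T : finType) (f g : T -> T).
Hypotheses (f_inj : injective f) (g_inj : injective g).

Definition cycle_transfer x0 y0 y := iter (findex f x0 y) g y0.

Variables x0 y0 : T.
Hypothesis eq_order : fingraph.order f x0 = fingraph.order g y0.
Local Notation phi := (cycle_transfer x0 y0).

Lemma cycle_transfer0 : phi x0 = y0.
Proof. by rewrite /cycle_transfer findex0. Qed.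

Lemma cycle_transfer_in y : fconnect g y0 (phi y).
Proof. exact: fconnect_iter. Qed.

Lemma cycle_transferS y : fconnect f x0 y -> phi (f y) = g (phi y).
Proof.
move/iter_findex=> {1}<-; rewrite /cycle_transfer -iterS -(iter_mod_order f_inj).
by rewrite findex_iter ?ltn_pmod // eq_order (iter_mod_order g_inj).
Qed.

Lemma cycle_transfer_iter j y : fconnect f x0 y -> phi (iter j f y) = iter j g (phi y).
Proof.
move=> x0y; elim: j => // j IHj.
by rewrite !iterS cycle_transferS ?IHj // (connect_trans x0y) ?fconnect_iter.
Qed.

Lemma cycle_transfer_inj : {in fconnect f x0 &, injective phi}.
Proof.
move=> y1 y2 x0y1 x0y2 /eqP; rewrite (eq_iter_order g_inj) -eq_order.
by rewrite -(eq_iter_order f_inj) !iter_findex // => /eqP.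
Qed.

End CycleTransfer.

Lemma dih_group_l n (u v : {perm 'I_n}) : u \in dih_group u v.
Proof. by rewrite mem_gen ?set21. Qed.

Lemma dih_group_r n (u v : {perm 'I_n}) : v \in dih_group u v.
Proof. by rewrite mem_gen ?set22. Qed.

Lemma nfixP n (s : {perm 'I_n}) (O : {set 'I_n}) :
  reflect (exists2 y, y \in O & s y = y) (nfix s O != 0).
Proof.
rewrite -lt0n; apply: (iffP card_gt0P) => [[y] | [y yO sy]].
  by rewrite inE => /andP[yO /eqP sy]; exists y.
by exists y; rewrite inE yO sy eqxx.
Qed.

Lemma dih_group_sym n (u v : {perm 'I_n}) : dih_group v u = dih_group u v.
Proof. by apply: val_inj; rewrite /= setUC. Qed.

Section DihedralOrbits.
Variables (n : nat) (u v : {perm 'I_n}).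
Hypotheses (uK : involutive u) (vK : involutive v).
Local Notation r := (u * v)%g.
Local Notation orb := (orbit 'P (dih_group u v)).
Let r_inj : injective r := @perm_inj _ r.

Lemma rot_u x : r (u x) = v x.
Proof. by rewrite permM uK. Qed.

Lemma rot_u_rot x : r (u (r x)) = u x.
Proof. by rewrite !permM uK vK. Qed.

Lemma rot_reflect j x : iter j r (u (iter j r x)) = u x.
Proof. by elim: j => // j IHj; rewrite iterSr iterS rot_u_rot. Qed.

Lemma fconnect_rot_u x y : fconnect r x y -> fconnect r (u y) (u x).
Proof. by move/iter_findex=> <-; rewrite -(rot_reflect (findex r x y) x) fconnect_iter. Qed.

Lemma fconnect_rot_uK x y : fconnect r x (u y) = fconnect r (u x) y.
Proof. by apply/idP/idP=> /fconnect_rot_u; rewrite uK (fconnect_sym r_inj). Qed.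

Lemma mem_dih_orbit x y : (y \in orb x) = fconnect r x y || fconnect r (u x) y.
Proof.
have uG := dih_group_l u v; have vG := dih_group_r u v.
apply/idP/idP=> [yO | /orP[] /iter_findex <-]; rewrite -?permX; last 2 first.
- exact: (mem_orbit 'P x (groupX _ (groupM uG vG))).
- by rewrite -permM; exact: (mem_orbit 'P x (groupM uG (groupX _ (groupM uG vG)))).
pose U := [set z | fconnect r x z || fconnect r (u x) z].
have Uu z : (u z \in U) = (z \in U).
  by rewrite !inE fconnect_rot_uK (fconnect_rot_uK (u x)) uK orbC.
have Ur z : (r z \in U) = (z \in U).
  by rewrite !inE -!(same_fconnect1_r r_inj).
have actsU : [acts dih_group u v, on U | 'P].
  rewrite gen_subG subUset !sub1set.
  by apply/andP; split; apply/astabsP=> z /=; rewrite apermE ?Uu // -rot_u Ur Uu.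
have := acts_sub_orbit x actsU; rewrite inE connect0 => /subsetP/(_ y yO).
by rewrite inE.
Qed.

Lemma mem_dih_orbit_u x y : (u y \in orb x) = (y \in orb x).
Proof. by rewrite !mem_dih_orbit fconnect_rot_uK (fconnect_rot_uK (u x)) uK orbC. Qed.

Lemma order_rot_u x : fingraph.order r (u x) = fingraph.order r x.
Proof.
have: fconnect r (u x) =i u @^-1: [set y | fconnect r x y].
  by move=> y; rewrite !inE fconnect_rot_uK.
by rewrite /fingraph.order => /eq_card->; rewrite card_preimset ?cardsE //; exact: perm_inj.
Qed.

Lemma card_dih_orbit x :
  #|orb x| = if fconnect r x (u x) then fingraph.order r x else (fingraph.order r x).*2.
Proof.
have rsym := fconnect_sym r_inj.
rewrite (@eq_card _ _ [predU fconnect r x & fconnect r (u x)] (mem_dih_orbit x)).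
case: ifP => [x_ux | x_ux].
  by apply: eq_card => y; rewrite !inE /= -(same_connect rsym x_ux) orbb.
rewrite -addnn -{2}order_rot_u -cardUI (@eq_card0 _ [predI _ & _]) ?addn0 //.
move=> y; rewrite !inE; apply: contraFF x_ux => /andP[x_y ux_y].
by rewrite (connect_trans x_y) // rsym.
Qed.

Lemma mem_dih_orbit_fixed x y : u x = x -> (y \in orb x) = fconnect r x y.
Proof. by move=> ux; rewrite mem_dih_orbit ux orbb. Qed.

Lemma u_fixed_iter x j :
  u x = x -> (u (iter j r x) == iter j r x) = (j.*2 == 0 %[mod fingraph.order r x]).
Proof.
move=> ux; rewrite -(inj_eq (iter_inj r_inj j)) rot_reflect ux -iterD addnn.
by rewrite eq_sym (eq_iter_order r_inj x _ 0).
Qed.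

Lemma v_fixed_iter x j :
  u x = x -> (v (iter j r x) == iter j r x) = (j.*2 == 1 %[mod fingraph.order r x]).
Proof.
move=> ux; rewrite -rot_u -(inj_eq (iter_inj r_inj j)) -iterSr iterS.
by rewrite rot_reflect ux -iterD addnn eq_sym (eq_iter_order r_inj x _ 1).
Qed.

Lemma nfix_u_dih_orbit x : u x = x -> nfix u (orb x) = (~~ odd #|orb x|).+1.
Proof.
move=> ux; rewrite card_dih_orbit ux connect0 -card_double_eq0_mod //.
set c := fingraph.order r x.
have iter_inj_ord : injective (fun j : 'I_c => iter j r x).
  move=> i j /eqP; rewrite (eq_iter_order r_inj) !modn_small //.
  by move/eqP/val_inj.
rewrite /nfix -(card_imset _ iter_inj_ord); apply: eq_card => y.
rewrite inE mem_dih_orbit_fixed //; apply/andP/imsetP => [[x_y] | [j]].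
  rewrite -(iter_findex x_y) => fixed; exists (Ordinal (findex_max x_y)) => //.
  by rewrite inE -u_fixed_iter.
by rewrite inE -u_fixed_iter // => fixed ->; rewrite fconnect_iter.
Qed.

Lemma odd_card_dih_orbit x y : u x = x -> y \in orb x -> v y = y -> odd #|orb x|.
Proof.
move=> ux; rewrite mem_dih_orbit_fixed // card_dih_orbit ux connect0.
move=> /iter_findex <- /eqP; rewrite v_fixed_iter //; apply: contraTT => c_even.
by apply/negP => /eqP/(congr1 odd); rewrite !odd_mod ?odd_double // (negbTE c_even).
Qed.

Lemma dih_orbit_v_fixed x : u x = x -> odd #|orb x| -> exists2 y, y \in orb x & v y = y.
Proof.
move=> ux; rewrite card_dih_orbit ux connect0 => c_odd.
exists (iter (fingraph.order r x)./2.+1 r x).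
  by rewrite mem_dih_orbit_fixed // fconnect_iter.
apply/eqP; rewrite v_fixed_iter //.
have -> : ((fingraph.order r x)./2.+1).*2 = fingraph.order r x + 1 by lia.
by rewrite modnDl.
Qed.

Lemma dih_orbit_fixed_point x :
  fconnect r x (u x) -> exists2 y, y \in orb x & (u y == y) || (v y == y).
Proof.
move/iter_findex; set a := findex r x (u x) => ux.
have in_orb j : iter j r x \in orb x by rewrite mem_dih_orbit fconnect_iter.
have [a_odd | a_even] := boolP (odd a).
  exists (iter a./2.+1 r x) => //; apply/orP; right; apply/eqP.
  apply: (iter_inj r_inj a./2.+1).
  rewrite -rot_u -iterSr iterS rot_reflect -ux -iterS -iterD; congr (iter _ r x); lia.
exists (iter a./2 r x) => //; apply/orP; left; apply/eqP.
apply: (iter_inj r_inj a./2).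
by rewrite rot_reflect -ux -iterD; congr (iter _ r x); lia.
Qed.

End DihedralOrbits.

Section OrbitShape.
Variables (n : nat) (u v : {perm 'I_n}).
Hypotheses (uK : involutive u) (vK : involutive v).
Local Notation r := (u * v)%g.
Local Notation orb := (orbit 'P (dih_group u v)).

Lemma orbit_type_u_fixed x :
  u x = x -> orbit_type u v (orb x) = if odd #|orb x| then 2 else 3.
Proof.
move=> ux; rewrite /orbit_type nfix_u_dih_orbit //.
have [c_odd | c_even] := boolP (odd #|orb x|).
  have [y yO vy] := dih_orbit_v_fixed uK vK ux c_odd.
  rewrite -(orbit_eqP yO) -(dih_group_sym u v) nfix_u_dih_orbit // dih_group_sym.
  by rewrite (orbit_eqP yO) c_odd.
have [/nfixP[y yO vy] | /negPn/eqP-> //] := boolP (nfix v (orb x) != 0).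
by rewrite (odd_card_dih_orbit uK vK ux yO vy) in c_even.
Qed.

Variant orbit_shape (O : {set 'I_n}) : nat -> Prop :=
  | OrbitFree x of O = orb x & ~~ fconnect r x (u x) : orbit_shape O 1
  | OrbitUFixed x of O = orb x & u x = x : orbit_shape O (if odd #|O| then 2 else 3)
  | OrbitVFixed x of O = orb x & v x = x : orbit_shape O 4.

Lemma orbit_shapeP O : O \in dih_orbits u v -> orbit_shape O (orbit_type u v O).
Proof.
case/imsetP => x _ ->.
have [/nfixP[y yO uy] | /negPn/eqP nu0] := boolP (nfix u (orb x) != 0).
  by rewrite -(orbit_eqP yO) orbit_type_u_fixed //; apply: OrbitUFixed.
have not_u_fixed y : y \in orb x -> u y != y.
  move=> yO; apply/eqP=> uy; suff: nfix u (orb x) != 0 by rewrite nu0.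
  by apply/nfixP; exists y.
have [/nfixP[y yO vy] | /negPn/eqP nv0] := boolP (nfix v (orb x) != 0).
  rewrite -(orbit_eqP yO) in nu0 not_u_fixed *.
  have y_even : ~~ odd #|orbit 'P (dih_group v u) y|.
    apply/negP => /(dih_orbit_v_fixed vK uK vy)[z].
    by rewrite dih_group_sym => /not_u_fixed/eqP.
  rewrite /orbit_type nu0 -(dih_group_sym u v) nfix_u_dih_orbit // y_even.
  by rewrite dih_group_sym; apply: OrbitVFixed.
rewrite /orbit_type nu0 nv0; apply: OrbitFree (erefl _) _.
apply/negP => /dih_orbit_fixed_point[//|//|y yO /orP[] /eqP fixed].
  by case/eqP: (not_u_fixed y yO).
suff: nfix v (orb x) != 0 by rewrite nv0.
by apply/nfixP; exists y.
Qed.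

End OrbitShape.

Definition dih_embed n (u v u' v' : {perm 'I_n}) (A B : {set 'I_n}) (f : 'I_n -> 'I_n) :=
  [/\ {in A &, injective f}, {in A, forall x, f x \in B},
      {in A, forall x, f (u x) = u' (f x)} & {in A, forall x, f (v x) = v' (f x)}].

Section DihMap.
Variables (n : nat) (u v u' v' : {perm 'I_n}).
Hypotheses (uK : involutive u) (vK : involutive v).
Hypotheses (uK' : involutive u') (vK' : involutive v').
Local Notation r := (u * v)%g.
Local Notation r' := (u' * v')%g.
Local Notation orb := (orbit 'P (dih_group u v)).
Local Notation orb' := (orbit 'P (dih_group u' v')).

Variables x0 y0 : 'I_n.
Hypothesis eq_order : fingraph.order r x0 = fingraph.order r' y0.
Hypothesis eq_split : fconnect r x0 (u x0) = fconnect r' y0 (u' y0).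
Hypothesis transfer_u : fconnect r x0 (u x0) -> cycle_transfer r r' x0 y0 (u x0) = u' y0.
Local Notation phi := (cycle_transfer r r' x0 y0).

Definition dih_map y := if fconnect r x0 y then phi y else u' (phi (u y)).

Let r_inj := @perm_inj _ r.
Let r'_inj := @perm_inj _ r'.

Lemma dih_map_cycle y : y \in orb x0 -> fconnect r' y0 (dih_map y) = fconnect r x0 y.
Proof.
rewrite /dih_map mem_dih_orbit //; case: ifP => [_ _ | x0y /= ux0y].
  exact: cycle_transfer_in.
have r'sym := fconnect_sym r'_inj.
rewrite fconnect_rot_uK // -(same_connect_r r'sym (cycle_transfer_in _ _ _ _ _)).
rewrite r'sym -eq_split; apply: contraFF x0y => x0_ux0.
by rewrite (connect_trans x0_ux0).
Qed.

Lemma dih_map_rot y : y \in orb x0 -> dih_map (r y) = r' (dih_map y).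
Proof.
rewrite /dih_map mem_dih_orbit // -(same_fconnect1_r r_inj).
case: ifP => [x0y _ | x0y /= ux0y]; first exact: cycle_transferS.
have x0_urw : fconnect r x0 (u (r y)).
  by rewrite fconnect_rot_uK // -(same_fconnect1_r r_inj).
by rewrite -[u y](rot_u_rot uK vK) cycle_transferS // rot_u_rot.
Qed.

Lemma dih_map_u y : y \in orb x0 -> dih_map (u y) = u' (dih_map y).
Proof.
rewrite /dih_map mem_dih_orbit // (fconnect_rot_uK uK vK).
case: (boolP (fconnect r x0 y)) => [x0y | x0y /= ux0y]; last by rewrite ux0y uK'.
case: ifP => [ux0y _ | _ _]; last by rewrite uK.
have x0_ux0 : fconnect r x0 (u x0).
  by rewrite (same_connect (fconnect_sym r_inj) x0y) (fconnect_sym r_inj).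
pose j := findex r x0 y; apply: (iter_inj r'_inj j).
rewrite -cycle_transfer_iter // ?fconnect_rot_uK // -{1}(iter_findex x0y) rot_reflect //.
by rewrite transfer_u // -{1}(rot_reflect uK' vK' j y0).
Qed.

Lemma dih_map_inj : {in orb x0 &, injective dih_map}.
Proof.
move=> y1 y2 y1O y2O eq12.
have eq_cycle : fconnect r x0 y1 = fconnect r x0 y2 by rewrite -!dih_map_cycle // eq12.
have phi_inj := cycle_transfer_inj r_inj r'_inj eq_order.
move: eq12; rewrite /dih_map -eq_cycle; case: ifP => [x0y1 | x0y1].
  have x0y2 : fconnect r x0 y2 by rewrite -eq_cycle.
  by apply: phi_inj.
move: y1O y2O; rewrite !mem_dih_orbit // -eq_cycle x0y1 /= -!(fconnect_rot_uK uK vK).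
by move=> x0_uy1 x0_uy2 /(can_inj uK') /(phi_inj _ _ x0_uy1 x0_uy2) /(can_inj uK).
Qed.

Lemma dih_map_embed : dih_embed u v u' v' (orb x0) (orb' y0) dih_map.
Proof.
split.
- exact: dih_map_inj.
- have phi_in z : phi z \in orb' y0 by rewrite mem_dih_orbit // cycle_transfer_in.
  have u'phi_in z : u' (phi z) \in orb' y0 by rewrite mem_dih_orbit_u.
  by move=> y _; rewrite /dih_map; case: ifP => _; [exact: phi_in | exact: u'phi_in].
- exact: dih_map_u.
- move=> y yO; rewrite -(rot_u v uK) -(rot_u v' uK').
  by rewrite dih_map_rot ?mem_dih_orbit_u // dih_map_u.
Qed.

End DihMap.

Section OrbitEmbedding.
Variables (n : nat) (u v u' v' : {perm 'I_n}).
Hypotheses (uK : involutive u) (vK : involutive v).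
Hypotheses (uK' : involutive u') (vK' : involutive v').
Local Notation r := (u * v)%g.
Local Notation r' := (u' * v')%g.
Local Notation orb := (orbit 'P (dih_group u v)).
Local Notation orb' := (orbit 'P (dih_group u' v')).

Lemma dih_embed_fixed x y : u x = x -> u' y = y -> #|orb x| = #|orb' y| ->
  exists f, dih_embed u v u' v' (orb x) (orb' y) f.
Proof.
move=> ux uy; rewrite !card_dih_orbit // ux uy !connect0 => eq_order.
exists (dih_map u v u' v' x y); apply: dih_map_embed; rewrite // ux ?uy ?connect0 //.
by move=> _; rewrite cycle_transfer0.
Qed.

Lemma dih_embed_free x y : ~~ fconnect r x (u x) -> ~~ fconnect r' y (u' y) ->
  #|orb x| = #|orb' y| -> exists f, dih_embed u v u' v' (orb x) (orb' y) f.
Proof.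
move=> /negPf x_free /negPf y_free.
rewrite !card_dih_orbit // x_free y_free => /double_inj eq_order.
by exists (dih_map u v u' v' x y); apply: dih_map_embed; rewrite ?x_free ?y_free.
Qed.

End OrbitEmbedding.

Lemma dih_embed_sym n (u v u' v' : {perm 'I_n}) A B f :
  dih_embed v u v' u' A B f -> dih_embed u v u' v' A B f.
Proof. by case. Qed.

Lemma dih_orbit_embed n (u v u' v' : {perm 'I_n}) O O' :
    involutive u -> involutive v -> involutive u' -> involutive v' ->
    O \in dih_orbits u v -> O' \in dih_orbits u' v' ->
    orbit_type u v O = orbit_type u' v' O' -> #|O| = #|O'| ->
  exists f, dih_embed u v u' v' O O' f.
Proof.
move=> uK vK uK' vK' /(orbit_shapeP uK vK) shape /(orbit_shapeP uK' vK') shape'.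
case: shape shape' => [x -> x_free | x -> ux | x -> vx];
  case=> [y -> y_free | y -> uy | y -> vy] //; try by case: ifP.
- by move=> _; apply: dih_embed_free.
- by move=> _; apply: dih_embed_fixed.
move=> _; rewrite -!(dih_group_sym u) -!(dih_group_sym u') => eq_card.
by have [f /dih_embed_sym] := dih_embed_fixed vK uK vK' uK' vx vy eq_card; exists f.
Qed.

Lemma dih_orbits_disjoint n (u v : {perm 'I_n}) O1 O2 :
  O1 \in dih_orbits u v -> O2 \in dih_orbits u v -> O1 != O2 -> [disjoint O1 & O2].
Proof.
move=> /imsetP[x _ ->] /imsetP[y _ ->]; apply: contraR => /pred0Pn[z /andP[/= xz yz]].
by rewrite -(orbit_eqP xz) -(orbit_eqP yz).
Qed.

Lemma dih_embedU n (u v u' v' : {perm 'I_n}) (A1 A2 B1 B2 : {set 'I_n}) f1 f2 :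
    [acts dih_group u v, on A1 | 'P] -> [disjoint B1 & B2] ->
    dih_embed u v u' v' A1 B1 f1 -> dih_embed u v u' v' A2 B2 f2 ->
  dih_embed u v u' v' (A1 :|: A2) (B1 :|: B2) (fun x => if x \in A1 then f1 x else f2 x).
Proof.
move=> /actsP actsA1 disjB [inj1 in1 fu1 fv1] [inj2 in2 fu2 fv2].
have A1_inv s x : s \in dih_group u v -> (s x \in A1) = (x \in A1) := actsA1 s ^~ x.
split=> [x y | x | x | x]; rewrite !inE.
- case: ifP => xA1; case: ifP => yA1 //= xA2 yA2 eq_f.
  + exact: inj1.
  + by have := disjointFr disjB (in1 x xA1); rewrite eq_f in2.
  + by have := disjointFr disjB (in1 y yA1); rewrite -eq_f in2.
  + exact: inj2.
- by case: ifP => xA1 /= xA; [rewrite in1 | rewrite in2 ?orbT].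
- by rewrite A1_inv ?dih_group_l //; case: ifP => xA1 /= xA; rewrite ?fu1 ?fu2.
by rewrite A1_inv ?dih_group_r //; case: ifP => xA1 /= xA; rewrite ?fv1 ?fv2.
Qed.

Definition dih_type_size n (u v : {perm 'I_n}) (O : {set 'I_n}) := (orbit_type u v O, #|O|).

Lemma dih_embed_cover n (u v u' v' : {perm 'I_n}) (L L' : seq {set 'I_n}) :
    involutive u -> involutive v -> involutive u' -> involutive v' ->
    uniq L' -> {subset L <= dih_orbits u v} -> {subset L' <= dih_orbits u' v'} ->
    perm_eq (map (dih_type_size u v) L) (map (dih_type_size u' v') L') ->
  exists f, dih_embed u v u' v' (\bigcup_(O <- L) O) (\bigcup_(O' <- L') O') f.
Proof.
move=> uK vK uK' vK'; elim: L L' => [|O L IHL] L' uniqL' subL subL' eq_pairs.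
  by exists id; split=> x; rewrite big_nil inE.
have /mapP[O' O'L' eq_pair] : dih_type_size u v O \in map (dih_type_size u' v') L'.
  by rewrite -(perm_mem eq_pairs) mem_head.
have eq_rem : perm_eq (map (dih_type_size u v) L) (map (dih_type_size u' v') (rem O' L')).
  rewrite -(perm_cons (dih_type_size u v O)); apply: perm_trans eq_pairs _.
  by rewrite eq_pair -map_cons perm_map // perm_to_rem.
have [||f1 emb1] := IHL _ (rem_uniq _ uniqL') _ _ eq_rem.
- by move=> X XL; apply: subL; rewrite inE XL orbT.
- by move=> X /mem_rem; apply: subL'.
have OO : O \in dih_orbits u v by apply: subL; rewrite mem_head.
have OO' : O' \in dih_orbits u' v' by apply: subL'.
case: eq_pair => eq_type eq_card.
have [f0 emb0] := dih_orbit_embed uK vK uK' vK' OO OO' eq_type eq_card.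
exists (fun x => if x \in O then f0 x else f1 x).
rewrite big_cons (big_rem _ O'L') /=; apply: dih_embedU => //.
  by case/imsetP: OO => x _ ->; exact: acts_orbit (subsetT _).
rewrite bigcup_seq; apply/bigcup_disjointP => X XL.
apply: dih_orbits_disjoint (OO') (subL' _ (mem_rem XL)) _.
by apply: contraTneq XL => <-; rewrite mem_rem_uniqF.
Qed.

Definition dih_type_sizes n (u v : {perm 'I_n}) := map (dih_type_size u v) (enum (dih_orbits u v)).

Lemma conjg_of_dih_type_sizes n (u v u' v' : {perm 'I_n}) :
    involutive u -> involutive v -> involutive u' -> involutive v' ->
    perm_eq (dih_type_sizes u v) (dih_type_sizes u' v') ->
  exists g, (u ^ g = u' /\ v ^ g = v')%g.
Proof.
move=> uK vK uK' vK' eq_pairs.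
have cover_orbits (s t : {perm 'I_n}) : \bigcup_(O <- enum (dih_orbits s t)) O = setT.
  apply/setP => x; rewrite inE bigcup_seq; apply/bigcupP.
  by exists (orbit 'P (dih_group s t) x); rewrite ?mem_enum ?imset_f ?orbit_refl.
have [||f []] := dih_embed_cover uK vK uK' vK' (enum_uniq _) _ _ eq_pairs.
- by move=> O; rewrite mem_enum.
- by move=> O; rewrite mem_enum.
rewrite !cover_orbits => f_inj _ fu fv.
have g_inj : injective f by move=> x y; apply: f_inj; rewrite inE.
have conjE (s s' : {perm 'I_n}) :
    {in setT, forall x, f (s x) = s' (f x)} -> (s ^ perm g_inj)%g = s'.
  move=> fs; apply/permP => x; rewrite -[x](permKV (perm g_inj)) permJ !permE.
  by rewrite fs ?inE.
by exists (perm g_inj); rewrite (conjE _ _ fu) (conjE _ _ fv).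
Qed.

Lemma mem_setact_perm n (g : {perm 'I_n}) (S : {set 'I_n}) x :
  (g x \in 'P^* S g) = (x \in S).
Proof. exact: (mem_imset _ _ (act_inj 'P g)). Qed.

Lemma nfix_conjg n (s g : {perm 'I_n}) (O : {set 'I_n}) :
  nfix (s ^ g) ('P^* O g) = nfix s O.
Proof.
rewrite /nfix -[RHS](card_setact 'P _ g); congr #|pred_of_set _|; apply/setP => y.
have [z ->] : exists z, y = g z by exists (g^-1%g y); rewrite permKV.
by rewrite !(in_set, mem_setact_perm) permJ (inj_eq perm_inj).
Qed.

Lemma dih_orbits_conjg n (u v g : {perm 'I_n}) :
  dih_orbits (u ^ g) (v ^ g) = [set 'P^* O g | O in dih_orbits u v].
Proof.
have groupJ : dih_group (u ^ g) (v ^ g) :=: (dih_group u v :^ g)%g.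
  by rewrite /= -genJ conjUg !conjg_set1.
apply/setP => O; apply/imsetP/imsetP => [[x _ ->] | [_ /imsetP[x _ ->] ->]].
  exists (orbit 'P (dih_group u v) (g^-1%g x)); first exact: imset_f.
  by rewrite setact_orbit groupJ /= apermE permKV.
by exists (g x) => //; rewrite setact_orbit groupJ.
Qed.

Lemma dih_type_sizes_conjg n (u v g : {perm 'I_n}) :
  perm_eq (dih_type_sizes (u ^ g) (v ^ g)) (dih_type_sizes u v).
Proof.
have type_size_conjg O : dih_type_size (u ^ g) (v ^ g) ('P^* O g) = dih_type_size u v O.
  by rewrite /dih_type_size /orbit_type !nfix_conjg card_setact.
rewrite /dih_type_sizes dih_orbits_conjg -(eq_map type_size_conjg) map_comp perm_map //.
apply: uniq_perm; rewrite ?enum_uniq ?(map_inj_uniq (act_inj 'P^* g)) ?enum_uniq //.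
move=> O; rewrite mem_enum; apply/imsetP/mapP => -[X]; rewrite ?mem_enum => XO ->.
all: by exists X; rewrite ?mem_enum.
Qed.

Lemma sizes_of_typeE n (u v : {perm 'I_n}) t :
  sizes_of_type u v t = sort leq [seq p.2 | p <- dih_type_sizes u v & p.1 == t].
Proof.
apply/(perm_sortP leq_total leq_trans anti_leq).
rewrite /dih_type_sizes filter_map -map_comp; apply: perm_map.
apply: uniq_perm => [||O]; [exact: enum_uniq | exact: filter_uniq (enum_uniq _) |].
by rewrite mem_enum mem_filter mem_enum inE andbC.
Qed.

Lemma dih_type_sizes_range n (u v : {perm 'I_n}) :
  involutive u -> involutive v -> {in dih_type_sizes u v, forall p, p.1 \in [:: 1; 2; 3; 4]}.
Proof.
move=> uK vK _ /mapP[O /[!mem_enum] /(orbit_shapeP uK vK) shape ->] /=.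
by case: shape => // x _ _; case: ifP.
Qed.

Lemma dihedral_decomposition_eq n (u v u' v' : {perm 'I_n}) :
    involutive u -> involutive v -> involutive u' -> involutive v' ->
  dihedral_decomposition u v = dihedral_decomposition u' v' <->
  perm_eq (dih_type_sizes u v) (dih_type_sizes u' v').
Proof.
move=> uK vK uK' vK'; have sort_leqP := perm_sortP leq_total leq_trans anti_leq.
have fiber_nil (s s' : {perm 'I_n}) k : involutive s -> involutive s' ->
    k \notin [:: 1; 2; 3; 4] -> [seq p.2 | p <- dih_type_sizes s s' & p.1 == k] = [::].
  move=> sK sK' k_other; rewrite (@eq_in_filter _ _ pred0) ?filter_pred0 // => p.
  by move/(dih_type_sizes_range sK sK') => p_type; apply: contraNF k_other => /eqP <-.
split=> [/eq_in_map eq_sizes | /perm_fibersP eq_fibers]; last first.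
  by apply/eq_in_map => t _; rewrite !sizes_of_typeE; apply/sort_leqP.
apply/perm_fibersP => t; have [t_type | t_other] := boolP (t \in [:: 1; 2; 3; 4]).
  by apply/sort_leqP; rewrite -!sizes_of_typeE eq_sizes.
by rewrite !fiber_nil.
Qed.

Lemma involutive_permK n (s : {perm 'I_n}) : involutive_perm s -> involutive s.
Proof. by move=> ss x; rewrite -permM ss perm1. Qed.

Lemma conjg_permE n (s t g : {perm 'I_n}) :
  (forall x, t x = g (s (g^-1%g x))) <-> (s ^ g)%g = t.
Proof.
have conjE x : (s ^ g)%g x = g (s (g^-1%g x)) by rewrite -{1}(permKV g x) permJ.
by split=> [eq_t | <- x]; [apply/permP => x; rewrite eq_t conjE | rewrite conjE].
Qed.

Theorem lemma5p3 (n : nat) (s1 s2 s1' s2' : {perm 'I_n}) :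
  involutive_perm s1 -> involutive_perm s2 ->
  involutive_perm s1' -> involutive_perm s2' ->
  ((exists g : {perm 'I_n},
      (forall x, s1' x = g (s1 (g^-1%g x))) /\
      (forall x, s2' x = g (s2 (g^-1%g x))))
   <-> dihedral_decomposition s1 s2 = dihedral_decomposition s1' s2').
Proof.
move=> /involutive_permK s1K /involutive_permK s2K.
move=> /involutive_permK s1K' /involutive_permK s2K'.
rewrite dihedral_decomposition_eq //; split.
  by case=> g [/conjg_permE <- /conjg_permE <-]; rewrite perm_sym dih_type_sizes_conjg.
case/conjg_of_dih_type_sizes => // g [s1g s2g].
by exists g; split; apply/conjg_permE.
Qed.
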